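(* Let $s=2$, $n=4$, and for $a\in(0,1/8)$ set $p_{12}=p_{23}=p_{34}=p_{41}=a$ and $p_{13}=p_{24}=\frac14(1-8a)$ (with $p_{ji}=p_{ij}$). Take initial data $y_1=(X_0,0)$, $y_2=(0,X_0)$, $y_3=(-X_0,0)$, $y_4=(0,-X_0)$ with $X_0>0$, and let $Y(t)$ be the solution of the gradient flow of relative entropy. Then: (i) if $\beta(x)=(1+x)^{-1}$ and $a\in(1/10,1/8)$, there is a constant $c>0$ such that $\operatorname{diam}Y(t)\ge c\,t^{1/4}$ for all $t\ge1$; (ii) if $\beta(x)=e^{-x}$ and $a\in(1/12,1/8)$, there is a constant $c>0$ such that $\operatorname{diam}Y(t)\ge c$ for all $t\ge0$.
   Context: Let $\mathcal{P}_n=\{(i,j): i\neq j\}$ and $(p_{ij})$ a symmetric probability distribution on $\mathcal{P}_n$. For $Y=(y_1,\dots,y_n)\in(\mathbb{R}^s)^n$ define $q_{ij}=\beta(|y_i-y_j|^2)/\sum_{k\neq \ell}\beta(|y_k-y_\ell|^2)$. The gradient flow of relative entropy is the ODE system $$\frac{dy_i}{dt}=4\sum_{j\neq i}(p_{ij}-q_{ij})(y_i-y_j)(\log\beta)'(|y_i-y_j|^2),\qquad i=1,\dots,n.$$ $\operatorname{diam}Y=\max_{i,j}|y_i-y_j|$. *)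

From Stdlib Require Import Reals Lra Arith.
From Coquelicot Require Import Coquelicot.
Open Scope R_scope.

(* Configurations of n = 4 points in R^2 (s = 2): Y i = (first, second coordinate),
   indices i = 0,1,2,3 correspond to the paper's points 1,2,3,4. *)
Definition config := nat -> R * R.

Definition sum4 (f : nat -> R) : R := f 0%nat + f 1%nat + f 2%nat + f 3%nat.
Definition max4 (f : nat -> R) : R := Rmax (Rmax (f 0%nat) (f 1%nat)) (Rmax (f 2%nat) (f 3%nat)).

(* p_{ij}: p_12=p_23=p_34=p_41=a, p_13=p_24=(1-8a)/4, p_ii = 0.
   With 0-based indices, i,j adjacent on the 4-cycle iff i+j odd. *)
Definition pmat (a : R) (i j : nat) : R :=
  if Nat.eqb i j then 0
  else if Nat.eqb (Nat.modulo (i + j) 2) 0 then (1 - 8 * a) / 4 else a.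

Definition sqdist (Y : config) (i j : nat) : R :=
  (fst (Y i) - fst (Y j)) ^ 2 + (snd (Y i) - snd (Y j)) ^ 2.

Definition Zsum (beta : R -> R) (Y : config) : R :=
  sum4 (fun k => sum4 (fun l => if Nat.eqb k l then 0 else beta (sqdist Y k l))).

Definition qmat (beta : R -> R) (Y : config) (i j : nat) : R :=
  beta (sqdist Y i j) / Zsum beta Y.

Definition dlogb (beta : R -> R) (x : R) : R := Derive (fun u => ln (beta u)) x.

Definition rhs1 (a : R) (beta : R -> R) (Y : config) (i : nat) : R :=
  4 * sum4 (fun j => if Nat.eqb i j then 0 else
    (pmat a i j - qmat beta Y i j) * (fst (Y i) - fst (Y j)) * dlogb beta (sqdist Y i j)).
Definition rhs2 (a : R) (beta : R -> R) (Y : config) (i : nat) : R :=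
  4 * sum4 (fun j => if Nat.eqb i j then 0 else
    (pmat a i j - qmat beta Y i j) * (snd (Y i) - snd (Y j)) * dlogb beta (sqdist Y i j)).

Definition is_flow_solution (a : R) (beta : R -> R) (Y : R -> config) : Prop :=
  (forall i : nat, (i < 4)%nat ->
     filterlim (fun t => fst (Y t i)) (at_right 0) (locally (fst (Y 0 i))) /\
     filterlim (fun t => snd (Y t i)) (at_right 0) (locally (snd (Y 0 i)))) /\
  (forall t : R, 0 < t -> forall i : nat, (i < 4)%nat ->
     is_derive (fun u => fst (Y u i)) t (rhs1 a beta (Y t) i) /\
     is_derive (fun u => snd (Y u i)) t (rhs2 a beta (Y t) i)).

Definition init_config (X0 : R) : config :=
  fun i => match i with
           | 0%nat => (X0, 0)
           | 1%nat => (0, X0)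
           | 2%nat => (- X0, 0)
           | _ => (0, - X0)
           end.

Definition diam (Y : config) : R :=
  max4 (fun i => max4 (fun j => sqrt (sqdist Y i j))).

Definition beta_cauchy (x : R) : R := / (1 + x).
Definition beta_gauss (x : R) : R := exp (- x).

From Stdlib Require Import Reals Lra Lia.
From Coquelicot Require Import Coquelicot.
Open Scope R_scope.

(* The flow preserves the symmetry of the initial square: rotating a solution by 90 degrees and
   relabelling the points cyclically gives a solution with the same initial data, and solutions
   are unique since the vector field is locally Lipschitz (Gronwall).  So [Y t] stays a square
   whose squared circumradius [r = |y_1|^2] solves the scalar equation [r' = 16 r S(r)], and
   [diam Y = 2 sqrt r].  For the Cauchy kernel and [a > 1/10], [S >= 0] and [r^2 S(r)] is bounded
   below for [r >= r(0)], so [r^2] grows at least linearly.  For the Gaussian kernel and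
   [a > 1/12], [S >= -1/4] keeps [r] positive, and [S > 0] near [r = 0] keeps [r] away from 0. *)

(** * Calculus on [[0, +oo)] *)

Lemma ball_R_bounds (x e y : R) : ball x e y -> x - e < y < x + e.
Proof.
  intro H. change (Rabs (y - x) < e) in H.
  apply Rabs_def2 in H. lra.
Qed.

Lemma is_derive_continuous (f : R -> R) (x l : R) : is_derive f x l -> continuous f x.
Proof.
  intro H. apply (@ex_derive_continuous R_AbsRing R_NormedModule). now exists l.
Qed.

Lemma is_derive_sqr (f : R -> R) (x l : R) :
  is_derive f x l -> is_derive (fun u => f u ^ 2) x (2 * f x * l).
Proof.
  intro H. replace (2 * f x * l) with (INR 2 * l * f x ^ 1) by (simpl; ring).
  exact (is_derive_pow f 2 x l H).
Qed.

(* [clamp0 f] extends the restriction of [f] to [[0, +oo)] by the constant [f 0] on the left,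
   so one-sided continuity at [0] becomes ordinary continuity. *)
Definition clamp0 (f : R -> R) (u : R) : R := f (Rmax 0 u).

Definition continuous_on_Rplus (f : R -> R) : Prop := forall x, continuous (clamp0 f) x.

Lemma clamp0_nonneg (f : R -> R) (u : R) : 0 <= u -> clamp0 f u = f u.
Proof. intro Hu. unfold clamp0. now rewrite Rmax_right. Qed.

Lemma continuous_on_Rplus_intro (f : R -> R) :
  filterlim f (at_right 0) (locally (f 0)) ->
  (forall t, 0 < t -> continuous f t) ->
  continuous_on_Rplus f.
Proof.
  intros Hr Hc s.
  destruct (Rtotal_order s 0) as [Hs | [-> | Hs]].
  - apply (continuous_ext_loc _ (fun _ => f 0)); [| apply continuous_const].
    assert (Hp : 0 < - s) by lra.
    exists (mkposreal _ Hp). intros y Hy. apply ball_R_bounds in Hy. simpl in Hy.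
    unfold clamp0. rewrite Rmax_left; [reflexivity | lra].
  - intros P [eps He].
    unfold clamp0 in He. rewrite Rmax_left in He by lra.
    destruct (Hr (ball (f 0) eps) (ex_intro _ eps (fun _ H => H))) as [d Hd].
    exists d. intros y Hy. apply He. unfold clamp0.
    destruct (Rle_lt_dec y 0) as [Hy0 | Hy0].
    + rewrite Rmax_left by lra. apply ball_center.
    + rewrite Rmax_right by lra. now apply Hd.
  - apply (continuous_ext_loc _ f); [| now apply Hc].
    exists (mkposreal _ Hs). intros y Hy. apply ball_R_bounds in Hy. simpl in Hy.
    symmetry. apply clamp0_nonneg. lra.
Qed.

Lemma continuous_on_Rplus_of_continuous (f : R -> R) :
  (forall x, continuous f x) -> continuous_on_Rplus f.
Proof.
  intro Hf. apply continuous_on_Rplus_intro; [| auto].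
  intros P HP. specialize (Hf 0 P HP). unfold filtermap, at_right, within in *.
  eapply filter_imp; [| exact Hf]. now intros x Hx _.
Qed.

Lemma continuous_on_Rplus_plus (f g : R -> R) :
  continuous_on_Rplus f -> continuous_on_Rplus g -> continuous_on_Rplus (fun u => f u + g u).
Proof. intros Hf Hg x. exact (continuous_plus _ _ x (Hf x) (Hg x)). Qed.

Lemma continuous_on_Rplus_minus (f g : R -> R) :
  continuous_on_Rplus f -> continuous_on_Rplus g -> continuous_on_Rplus (fun u => f u - g u).
Proof. intros Hf Hg x. exact (continuous_minus _ _ x (Hf x) (Hg x)). Qed.

Lemma continuous_on_Rplus_mult (f g : R -> R) :
  continuous_on_Rplus f -> continuous_on_Rplus g -> continuous_on_Rplus (fun u => f u * g u).
Proof. intros Hf Hg x. exact (continuous_mult _ _ x (Hf x) (Hg x)). Qed.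

Lemma continuous_on_Rplus_sqr (f : R -> R) :
  continuous_on_Rplus f -> continuous_on_Rplus (fun u => f u ^ 2).
Proof.
  intros Hf x. apply (continuous_ext (fun u => clamp0 f u * clamp0 f u)).
  - intro u. unfold clamp0. simpl. now rewrite Rmult_1_r.
  - exact (continuous_mult _ _ x (Hf x) (Hf x)).
Qed.

Lemma continuous_on_Rplus_bounded (f : R -> R) (T : R) :
  0 <= T -> continuous_on_Rplus f -> exists M, forall s, 0 <= s <= T -> f s <= M.
Proof.
  intros HT Hc.
  destruct (continuity_ab_maj (clamp0 f) 0 T HT) as [m [Hm _]].
  - intros c _. apply continuity_pt_filterlim, Hc.
  - exists (clamp0 f m). intros s Hs. rewrite <- (clamp0_nonneg f s) by lra. now apply Hm.
Qed.

Lemma Rplus_deriv_nonneg_le (f df : R -> R) (t : R) :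
  0 <= t -> continuous_on_Rplus f ->
  (forall s, 0 < s -> is_derive f s (df s)) ->
  (forall s, 0 <= s <= t -> 0 <= df s) ->
  f 0 <= f t.
Proof.
  intros [Ht | <-] Hc Hd Hpos; [| lra].
  destruct (MVT_gen (clamp0 f) 0 t df) as [c [Hct Hmvt]].
  - intros x Hx. rewrite Rmin_left, Rmax_right in Hx by lra.
    apply (is_derive_ext_loc f); [| apply Hd; lra].
    exists (mkposreal _ (proj1 Hx)). intros y Hy. apply ball_R_bounds in Hy. simpl in Hy.
    symmetry. apply clamp0_nonneg. lra.
  - intros x _. apply continuity_pt_filterlim, Hc.
  - rewrite Rmin_left, Rmax_right in Hct by lra.
    rewrite !clamp0_nonneg in Hmvt by lra.
    specialize (Hpos c Hct). nra.
Qed.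

Lemma gronwall_zero (E dE : R -> R) (K t : R) :
  0 <= t -> continuous_on_Rplus E ->
  (forall s, 0 < s -> is_derive E s (dE s)) ->
  (forall s, 0 <= s <= t -> dE s <= K * E s) ->
  E 0 = 0 -> E t <= 0.
Proof.
  intros Ht Hc Hd Hle H0.
  set (w := fun u => exp (- K * u)).
  assert (Hw : forall u, is_derive w u (- K * w u)).
  { intro u. unfold w. auto_derive; [easy | ring]. }
  assert (Hmono := Rplus_deriv_nonneg_le (fun u => - (E u * w u))
                     (fun u => (K * E u - dE u) * w u) t Ht).
  cbv beta in Hmono. rewrite H0, Rmult_0_l, Ropp_0 in Hmono.
  assert (Hwt : 0 < w t) by apply exp_pos.
  enough (0 <= - (E t * w t)) by nra.
  apply Hmono.
  - intro x. apply (continuous_opp (fun u => clamp0 E u * clamp0 w u)).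
    apply (continuous_on_Rplus_mult E w Hc).
    apply continuous_on_Rplus_of_continuous. intro u. exact (is_derive_continuous _ _ _ (Hw u)).
  - intros s Hs. replace ((K * E s - dE s) * w s) with (- (dE s * w s + E s * (- K * w s))) by ring.
    apply (is_derive_opp (fun u => E u * w u)).
    apply (is_derive_mult E w); [auto | apply Hw | exact Rmult_comm].
  - intros s Hs. specialize (Hle s Hs). assert (0 < w s) by apply exp_pos. nra.
Qed.

Lemma is_derive_pos_lt_left (f : R -> R) (c l : R) :
  is_derive f c l -> 0 < l -> forall e, 0 < e -> exists s, c - e < s < c /\ f s < f c.
Proof.
  intros Hd Hl e He. apply is_derive_Reals in Hd.
  destruct (Hd l Hl) as [[d Hd0] Hdd]. simpl in Hdd.
  set (h := - Rmin (d / 2) (e / 2)).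
  assert (Hh1 : - h <= d / 2) by (unfold h; rewrite Ropp_involutive; apply Rmin_l).
  assert (Hh2 : - h <= e / 2) by (unfold h; rewrite Ropp_involutive; apply Rmin_r).
  assert (Hh : h < 0) by (unfold h; assert (0 < Rmin (d / 2) (e / 2)) by (apply Rmin_pos; lra); lra).
  assert (Hq := Hdd h ltac:(lra) ltac:(rewrite Rabs_left; lra)).
  apply Rabs_def2 in Hq.
  exists (c + h). split; [lra |].
  destruct (Rlt_le_dec (f (c + h)) (f c)) as [| Hge]; [easy |].
  assert ((f (c + h) - f c) / h <= 0).
  { unfold Rdiv. apply Rmult_le_0_l; [lra |]. left. now apply Rinv_lt_0_compat. }
  lra.
Qed.

Lemma Rplus_lower_barrier (f df : R -> R) (m : R) :
  continuous_on_Rplus f ->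
  (forall s, 0 < s -> is_derive f s (df s)) ->
  m <= f 0 ->
  (forall s, 0 < s -> f s < m -> 0 < df s) ->
  forall t, 0 <= t -> m <= f t.
Proof.
  intros Hc Hd H0 Hup t Ht.
  destruct (Rle_lt_dec m (f t)) as [| Hlt]; [easy | exfalso].
  destruct (continuity_ab_min (clamp0 f) 0 t Ht) as [c [Hmin Hct]].
  { intros x _. apply continuity_pt_filterlim, Hc. }
  assert (Hmin' : forall s, 0 <= s <= t -> f c <= f s).
  { intros s Hs. rewrite <- (clamp0_nonneg f c), <- (clamp0_nonneg f s) by lra. auto. }
  assert (Hft := Hmin' t ltac:(lra)).
  assert (Hc0 : 0 < c).
  { destruct (proj1 Hct) as [| <-]; [easy |]. lra. }
  destruct (is_derive_pos_lt_left f c _ (Hd c Hc0) (Hup c Hc0 ltac:(lra)) c Hc0) as [s [Hs Hfs]].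
  specialize (Hmin' s ltac:(lra)). lra.
Qed.

Fixpoint sum_lt (n : nat) (f : nat -> R) : R :=
  match n with O => 0 | S m => sum_lt m f + f m end.

Lemma sum_lt_S (n : nat) (f : nat -> R) : sum_lt (S n) f = sum_lt n f + f n.
Proof. reflexivity. Qed.

Lemma sum_lt_ext (n : nat) (f g : nat -> R) :
  (forall k, (k < n)%nat -> f k = g k) -> sum_lt n f = sum_lt n g.
Proof.
  induction n as [| n IH]; intro H; simpl; [easy |].
  rewrite IH, H by (auto; lia). reflexivity.
Qed.

Lemma sum_lt_le (n : nat) (f g : nat -> R) :
  (forall k, (k < n)%nat -> f k <= g k) -> sum_lt n f <= sum_lt n g.
Proof.
  induction n as [| n IH]; intro H; simpl; [lra |].
  assert (f n <= g n) by (apply H; lia).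
  assert (sum_lt n f <= sum_lt n g) by (apply IH; intros; apply H; lia). lra.
Qed.

Lemma sum_lt_nonneg (n : nat) (f : nat -> R) :
  (forall k, (k < n)%nat -> 0 <= f k) -> 0 <= sum_lt n f.
Proof.
  intro H. replace 0 with (sum_lt n (fun _ => 0)).
  - now apply sum_lt_le.
  - induction n; simpl; [easy | rewrite IHn; [ring | intros; apply H; lia]].
Qed.

Lemma sum_lt_term_le (n : nat) (f : nat -> R) (k : nat) :
  (forall j, (j < n)%nat -> 0 <= f j) -> (k < n)%nat -> f k <= sum_lt n f.
Proof.
  induction n as [| n IH]; intros H Hk; simpl; [lia |].
  destruct (Nat.eq_dec k n) as [-> | Hne].
  - assert (0 <= sum_lt n f) by (apply sum_lt_nonneg; intros; apply H; lia). lra.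
  - assert (f k <= sum_lt n f) by (apply IH; [intros; apply H |]; lia).
    assert (0 <= f n) by (apply H; lia). lra.
Qed.

Lemma sum_lt_scal (n : nat) (c : R) (f : nat -> R) :
  sum_lt n (fun k => c * f k) = c * sum_lt n f.
Proof. induction n as [| n IH]; simpl; [ring | rewrite IH; ring]. Qed.

Lemma sum_lt_Rabs_sqr (n : nat) (u : nat -> R) :
  sum_lt n (fun k => Rabs (u k)) ^ 2 <= INR n * sum_lt n (fun k => u k ^ 2).
Proof.
  induction n as [| n IH]; [simpl; lra |].
  destruct n as [| m]; [cbn [sum_lt]; rewrite !Rplus_0_l, pow2_abs; simpl; lra |].
  rewrite !(sum_lt_S (S m)).
  set (A := sum_lt (S m) (fun k => Rabs (u k))) in *.
  set (Q := sum_lt (S m) (fun k => u k ^ 2)) in *.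
  assert (HA : 0 <= A) by (apply sum_lt_nonneg; intros; apply Rabs_pos).
  rewrite S_INR, <- (pow2_abs (u (S m))).
  set (x := Rabs (u (S m))). assert (Hx : 0 <= x) by apply Rabs_pos.
  assert (Hm : 0 < INR (S m)) by (apply lt_0_INR; lia).
  set (n := INR (S m)) in *. clearbody A Q x n.
  (* 2 A x <= A^2 / n + n x^2 <= Q + n x^2 *)
  assert (2 * A * x <= Q + n * x ^ 2).
  { assert (0 <= (A - n * x) ^ 2) by apply pow2_ge_0.
    apply Rmult_le_reg_l with n; nra. }
  nra.
Qed.

Lemma sum_lt_nonneg_eq0 (n : nat) (f : nat -> R) :
  (forall k, (k < n)%nat -> 0 <= f k) -> sum_lt n f <= 0 -> forall k, (k < n)%nat -> f k = 0.
Proof.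
  intros H Hs k Hk. assert (f k <= sum_lt n f) by now apply sum_lt_term_le.
  specialize (H k Hk). lra.
Qed.

Lemma is_derive_sum_lt (f : R -> nat -> R) (df : nat -> R) (n : nat) (x : R) :
  (forall k, (k < n)%nat -> is_derive (fun u => f u k) x (df k)) ->
  is_derive (fun u => sum_lt n (f u)) x (sum_lt n df).
Proof.
  induction n as [| n IH]; intro H; simpl.
  - apply (is_derive_const 0).
  - apply (is_derive_plus (fun u => sum_lt n (f u))); [apply IH; intros |]; apply H; lia.
Qed.

Lemma continuous_on_Rplus_sum_lt (f : R -> nat -> R) (n : nat) :
  (forall k, (k < n)%nat -> continuous_on_Rplus (fun u => f u k)) ->
  continuous_on_Rplus (fun u => sum_lt n (f u)).
Proof.
  induction n as [| n IH]; intro H; simpl.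
  - intro x. apply continuous_const.
  - apply (continuous_on_Rplus_plus (fun u => sum_lt n (f u))); [apply IH; intros |]; apply H; lia.
Qed.

(** * Locally Lipschitz functions of a configuration *)

Definition coord (Y : config) (k : nat) : R :=
  if (k <? 4)%nat then fst (Y k) else snd (Y (k - 4)%nat).

Lemma coord_fst (Y : config) (i : nat) : (i < 4)%nat -> coord Y i = fst (Y i).
Proof. intro Hi. unfold coord. now rewrite (proj2 (Nat.ltb_lt i 4) Hi). Qed.

Lemma coord_snd (Y : config) (i : nat) : coord Y (i + 4) = snd (Y i).
Proof.
  unfold coord. rewrite (proj2 (Nat.ltb_ge (i + 4) 4)) by lia.
  now replace (i + 4 - 4)%nat with i by lia.
Qed.

Definition bounded_config (M : R) (Y : config) : Prop :=
  forall k, (k < 8)%nat -> Rabs (coord Y k) <= M.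

Definition dist1 (Y Z : config) : R := sum_lt 8 (fun k => Rabs (coord Y k - coord Z k)).

Lemma dist1_nonneg (Y Z : config) : 0 <= dist1 Y Z.
Proof. apply sum_lt_nonneg. intros; apply Rabs_pos. Qed.

Lemma dist1_sym (Y Z : config) : dist1 Y Z = dist1 Z Y.
Proof. apply sum_lt_ext. intros. apply Rabs_minus_sym. Qed.

Definition lip_bounded (M : R) (f : config -> R) : Prop :=
  exists B L, 0 <= B /\ 0 <= L /\
    forall Y Z, bounded_config M Y -> bounded_config M Z ->
      Rabs (f Y) <= B /\ Rabs (f Y - f Z) <= L * dist1 Y Z.

Section LipBounded.

Variable M : R.
Hypothesis HM : 0 <= M.

Lemma lip_bounded_ext (f g : config -> R) :
  (forall Y, f Y = g Y) -> lip_bounded M g -> lip_bounded M f.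
Proof.
  intros E [B [L [HB [HL H]]]]. exists B, L. do 2 (split; [easy |]).
  intros Y Z HY HZ. rewrite !E. now apply H.
Qed.

Lemma lip_bounded_const (c : R) : lip_bounded M (fun _ => c).
Proof.
  exists (Rabs c), 0. split; [apply Rabs_pos | split; [lra |]].
  intros Y Z _ _. rewrite Rminus_diag, Rabs_R0. lra.
Qed.

Lemma lip_bounded_coord (k : nat) : (k < 8)%nat -> lip_bounded M (fun Y => coord Y k).
Proof.
  intros Hk. exists M, 1. split; [easy | split; [lra |]].
  intros Y Z HY HZ. split; [now apply HY |]. rewrite Rmult_1_l.
  apply (sum_lt_term_le 8 (fun k => Rabs (coord Y k - coord Z k))); [intros; apply Rabs_pos | easy].
Qed.

Lemma lip_bounded_fst (i : nat) : (i < 4)%nat -> lip_bounded M (fun Y => fst (Y i)).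
Proof.
  intro Hi. apply (lip_bounded_ext _ (fun Y => coord Y i)).
  - intro Y. now rewrite coord_fst.
  - apply lip_bounded_coord. lia.
Qed.

Lemma lip_bounded_snd (i : nat) : (i < 4)%nat -> lip_bounded M (fun Y => snd (Y i)).
Proof.
  intro Hi. apply (lip_bounded_ext _ (fun Y => coord Y (i + 4))).
  - intro Y. now rewrite coord_snd.
  - apply lip_bounded_coord. lia.
Qed.

Lemma lip_bounded_plus (f g : config -> R) :
  lip_bounded M f -> lip_bounded M g -> lip_bounded M (fun Y => f Y + g Y).
Proof.
  intros [B1 [L1 [HB1 [HL1 H1]]]] [B2 [L2 [HB2 [HL2 H2]]]].
  exists (B1 + B2), (L1 + L2). split; [lra | split; [lra |]].
  intros Y Z HY HZ.
  destruct (H1 Y Z HY HZ) as [Hf Hf']. destruct (H2 Y Z HY HZ) as [Hg Hg'].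
  split.
  - eapply Rle_trans; [apply Rabs_triang | lra].
  - replace (f Y + g Y - (f Z + g Z)) with ((f Y - f Z) + (g Y - g Z)) by ring.
    eapply Rle_trans; [apply Rabs_triang | lra].
Qed.

Lemma lip_bounded_opp (f : config -> R) : lip_bounded M f -> lip_bounded M (fun Y => - f Y).
Proof.
  intros [B [L [HB [HL H]]]]. exists B, L. split; [easy | split; [easy |]].
  intros Y Z HY HZ. replace (- f Y - - f Z) with (- (f Y - f Z)) by ring.
  rewrite !Rabs_Ropp. now apply H.
Qed.

Lemma lip_bounded_minus (f g : config -> R) :
  lip_bounded M f -> lip_bounded M g -> lip_bounded M (fun Y => f Y - g Y).
Proof. intros Hf Hg. now apply lip_bounded_plus, lip_bounded_opp. Qed.

Lemma lip_bounded_mult (f g : config -> R) :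
  lip_bounded M f -> lip_bounded M g -> lip_bounded M (fun Y => f Y * g Y).
Proof.
  intros [B1 [L1 [HB1 [HL1 H1]]]] [B2 [L2 [HB2 [HL2 H2]]]].
  exists (B1 * B2), (B1 * L2 + B2 * L1). split; [nra | split; [nra |]].
  intros Y Z HY HZ.
  destruct (H1 Y Z HY HZ) as [HfY Hf']. destruct (H2 Y Z HY HZ) as [HgY Hg'].
  destruct (H2 Z Y HZ HY) as [HgZ _].
  rewrite Rabs_mult. split; [apply Rmult_le_compat; auto; apply Rabs_pos |].
  replace (f Y * g Y - f Z * g Z) with (f Y * (g Y - g Z) + g Z * (f Y - f Z)) by ring.
  eapply Rle_trans; [apply Rabs_triang |]. rewrite !Rabs_mult.
  assert (Rabs (f Y) * Rabs (g Y - g Z) <= B1 * (L2 * dist1 Y Z))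
    by (apply Rmult_le_compat; auto; apply Rabs_pos).
  assert (Rabs (g Z) * Rabs (f Y - f Z) <= B2 * (L1 * dist1 Y Z))
    by (apply Rmult_le_compat; auto; apply Rabs_pos).
  nra.
Qed.

Lemma lip_bounded_inv (f : config -> R) (d : R) :
  0 < d -> (forall Y, bounded_config M Y -> d <= f Y) ->
  lip_bounded M f -> lip_bounded M (fun Y => / f Y).
Proof.
  intros Hd Hf [B [L [HB [HL H]]]].
  exists (/ d), (L / (d * d)). split; [| split].
  - left. now apply Rinv_0_lt_compat.
  - apply Rmult_le_pos; [easy |]. left. apply Rinv_0_lt_compat. nra.
  - intros Y Z HY HZ. assert (HfY := Hf Y HY). assert (HfZ := Hf Z HZ). split.
    + rewrite Rabs_pos_eq by (left; apply Rinv_0_lt_compat; lra).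
      now apply Rinv_le_contravar.
    + replace (/ f Y - / f Z) with ((f Z - f Y) * / (f Y * f Z)) by (field; lra).
      rewrite Rabs_mult, (Rabs_pos_eq (/ (f Y * f Z))) by (left; apply Rinv_0_lt_compat; nra).
      destruct (H Z Y HZ HY) as [_ HL']. rewrite dist1_sym in HL'.
      assert (/ (f Y * f Z) <= / (d * d)) by (apply Rinv_le_contravar; nra).
      assert (0 <= / (f Y * f Z)) by (left; apply Rinv_0_lt_compat; nra).
      assert (Hdist := dist1_nonneg Y Z).
      apply Rle_trans with (L * dist1 Y Z * / (d * d)); [| right; field; lra].
      apply Rmult_le_compat; auto. apply Rabs_pos.
Qed.

Lemma lip_bounded_comp (phi : R -> R) (f : config -> R) :
  (forall x, 0 <= x -> Rabs (phi x) <= 1) ->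
  (forall x y, 0 <= x -> 0 <= y -> Rabs (phi x - phi y) <= Rabs (x - y)) ->
  (forall Y, 0 <= f Y) -> lip_bounded M f -> lip_bounded M (fun Y => phi (f Y)).
Proof.
  intros Hp1 Hp2 Hf [B [L [HB [HL H]]]].
  exists 1, L. split; [lra | split; [easy |]].
  intros Y Z HY HZ. split; [now apply Hp1 |].
  eapply Rle_trans; [apply Hp2; auto | now apply H].
Qed.

Lemma lip_bounded_sum4 (f : nat -> config -> R) :
  (forall j, (j < 4)%nat -> lip_bounded M (f j)) -> lip_bounded M (fun Y => sum4 (fun j => f j Y)).
Proof. intros H. unfold sum4. repeat apply lip_bounded_plus; apply H; lia. Qed.

Lemma lip_bounded_if (b : bool) (f g : config -> R) :
  lip_bounded M f -> lip_bounded M g -> lip_bounded M (fun Y => if b then f Y else g Y).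
Proof. now destruct b. Qed.

Lemma lip_bounded_family (f : nat -> config -> R) (n : nat) :
  (forall k, (k < n)%nat -> lip_bounded M (f k)) ->
  exists L, 0 <= L /\ forall k Y Z, (k < n)%nat -> bounded_config M Y -> bounded_config M Z ->
    Rabs (f k Y - f k Z) <= L * dist1 Y Z.
Proof.
  induction n as [| n IH]; intro H.
  - exists 0. split; [lra | intros; lia].
  - destruct IH as [L [HL HL']]; [intros; apply H; lia |].
    destruct (H n ltac:(lia)) as [B [Ln [_ [HLn Hn]]]].
    exists (L + Ln). split; [lra |]. intros k Y Z Hk HY HZ.
    assert (Hdist := dist1_nonneg Y Z).
    destruct (Nat.eq_dec k n) as [-> | Hne].
    + destruct (Hn Y Z HY HZ). nra.
    + assert (HLk := HL' k Y Z ltac:(lia) HY HZ). nra.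
Qed.

End LipBounded.

Record admissible_kernel (beta dlog : R -> R) : Prop := {
  kernel_pos : forall x, 0 <= x -> 0 < beta x;
  kernel_le_1 : forall x, 0 <= x -> beta x <= 1;
  kernel_lip : forall x y, 0 <= x -> 0 <= y -> Rabs (beta x - beta y) <= Rabs (x - y);
  kernel_lower : forall D, 0 <= D -> exists d, 0 < d /\ forall x, 0 <= x <= D -> d <= beta x;
  dlog_bounded : forall x, 0 <= x -> Rabs (dlog x) <= 1;
  dlog_lip : forall x y, 0 <= x -> 0 <= y -> Rabs (dlog x - dlog y) <= Rabs (x - y);
  dlogb_eq : forall x, 0 <= x -> dlogb beta x = dlog x }.

Lemma sqdist_nonneg (Y : config) (i j : nat) : 0 <= sqdist Y i j.
Proof.
  unfold sqdist. assert (H1 := pow2_ge_0 (fst (Y i) - fst (Y j))).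
  assert (H2 := pow2_ge_0 (snd (Y i) - snd (Y j))). lra.
Qed.

Definition vector_field (a : R) (beta : R -> R) (Y : config) (k : nat) : R :=
  if (k <? 4)%nat then rhs1 a beta Y k else rhs2 a beta Y (k - 4)%nat.

Section VectorField.

Variables (a : R) (beta dlog : R -> R) (M : R).
Hypothesis Hker : admissible_kernel beta dlog.
Hypothesis HM : 0 <= M.

Lemma lip_bounded_sqdist (i j : nat) :
  (i < 4)%nat -> (j < 4)%nat -> lip_bounded M (fun Y => sqdist Y i j).
Proof.
  intros Hi Hj. unfold sqdist. apply lip_bounded_plus.
  - apply (lip_bounded_ext _ _ (fun Y => (fst (Y i) - fst (Y j)) * (fst (Y i) - fst (Y j))));
      [intro; ring |].
    apply lip_bounded_mult; apply lip_bounded_minus; now apply lip_bounded_fst.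
  - apply (lip_bounded_ext _ _ (fun Y => (snd (Y i) - snd (Y j)) * (snd (Y i) - snd (Y j))));
      [intro; ring |].
    apply lip_bounded_mult; apply lip_bounded_minus; now apply lip_bounded_snd.
Qed.

Lemma lip_bounded_kernel (i j : nat) :
  (i < 4)%nat -> (j < 4)%nat -> lip_bounded M (fun Y => beta (sqdist Y i j)).
Proof.
  intros Hi Hj. apply lip_bounded_comp; [| apply (kernel_lip _ _ Hker) | intro; apply sqdist_nonneg |
    now apply lip_bounded_sqdist].
  intros x Hx. rewrite Rabs_pos_eq by (left; now apply (kernel_pos _ _ Hker)).
  now apply (kernel_le_1 _ _ Hker).
Qed.

Lemma Zsum_lower : exists d, 0 < d /\ forall Y, bounded_config M Y -> d <= Zsum beta Y.
Proof.
  destruct (kernel_lower _ _ Hker (8 * M ^ 2)) as [d [Hd Hlow]]; [nra |].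
  exists d. split; [easy |]. intros Y HY.
  assert (Hb : forall k l, 0 < beta (sqdist Y k l))
    by (intros; apply (kernel_pos _ _ Hker), sqdist_nonneg).
  assert (Hs : sqdist Y 0 1 <= 8 * M ^ 2).
  { assert (H0 := HY 0%nat ltac:(lia)). assert (H1 := HY 1%nat ltac:(lia)).
    assert (H4 := HY 4%nat ltac:(lia)). assert (H5 := HY 5%nat ltac:(lia)).
    unfold coord in *; simpl in *. apply Rabs_le_between in H0, H1, H4, H5.
    unfold sqdist. nra. }
  specialize (Hlow _ (conj (sqdist_nonneg Y 0 1) Hs)).
  (* every other term of [Zsum] is positive *)
  unfold Zsum, sum4; simpl.
  pose proof (Hb 0 2)%nat. pose proof (Hb 0 3)%nat. pose proof (Hb 1 0)%nat.
  pose proof (Hb 1 2)%nat. pose proof (Hb 1 3)%nat. pose proof (Hb 2 0)%nat.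
  pose proof (Hb 2 1)%nat. pose proof (Hb 2 3)%nat. pose proof (Hb 3 0)%nat.
  pose proof (Hb 3 1)%nat. pose proof (Hb 3 2)%nat.
  lra.
Qed.

Lemma lip_bounded_vector_field (k : nat) :
  (k < 8)%nat -> lip_bounded M (fun Y => vector_field a beta Y k).
Proof.
  intro Hk.
  assert (Hq : forall i j, (i < 4)%nat -> (j < 4)%nat -> lip_bounded M (fun Y => qmat beta Y i j)).
  { intros i j Hi Hj. destruct Zsum_lower as [d [Hd Hlow]].
    apply lip_bounded_mult; [now apply lip_bounded_kernel |].
    apply (lip_bounded_inv _ _ d Hd Hlow).
    unfold Zsum. apply lip_bounded_sum4; intros l Hl. apply lip_bounded_sum4; intros m Hm.
    apply lip_bounded_if; [apply lip_bounded_const | now apply lip_bounded_kernel]. }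
  assert (Hd : forall i j, (i < 4)%nat -> (j < 4)%nat ->
            lip_bounded M (fun Y => dlogb beta (sqdist Y i j))).
  { intros i j Hi Hj. apply (lip_bounded_ext _ _ (fun Y => dlog (sqdist Y i j))).
    - intro Y. apply (dlogb_eq _ _ Hker), sqdist_nonneg.
    - apply lip_bounded_comp; [apply (dlog_bounded _ _ Hker) | apply (dlog_lip _ _ Hker) |
        intro; apply sqdist_nonneg | now apply lip_bounded_sqdist]. }
  unfold vector_field. destruct (k <? 4)%nat eqn:Ek.
  - apply Nat.ltb_lt in Ek. unfold rhs1.
    apply lip_bounded_mult; [apply lip_bounded_const |].
    apply lip_bounded_sum4; intros j Hj. apply lip_bounded_if; [apply lip_bounded_const |].
    apply lip_bounded_mult; [apply lip_bounded_mult | now apply Hd].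
    + apply lip_bounded_minus; [apply lip_bounded_const | now apply Hq].
    + apply lip_bounded_minus; now apply lip_bounded_fst.
  - apply Nat.ltb_ge in Ek. assert (Hi : (k - 4 < 4)%nat) by lia. unfold rhs2.
    apply lip_bounded_mult; [apply lip_bounded_const |].
    apply lip_bounded_sum4; intros j Hj. apply lip_bounded_if; [apply lip_bounded_const |].
    apply lip_bounded_mult; [apply lip_bounded_mult | now apply Hd].
    + apply lip_bounded_minus; [apply lip_bounded_const | now apply Hq].
    + apply lip_bounded_minus; now apply lip_bounded_snd.
Qed.

(* From the Lipschitz bound and Cauchy-Schwarz. *)
Lemma vector_field_one_sided_lip :
  exists K, forall Y Z, bounded_config M Y -> bounded_config M Z ->
    sum_lt 8 (fun k => 2 * (coord Y k - coord Z k) * (vector_field a beta Y k - vector_field a beta Z k))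
      <= K * sum_lt 8 (fun k => (coord Y k - coord Z k) ^ 2).
Proof.
  destruct (lip_bounded_family M (fun k Y => vector_field a beta Y k) 8) as [L [HL HLk]].
  { intros k Hk. now apply lip_bounded_vector_field. }
  exists (16 * L). intros Y Z HY HZ.
  set (D := dist1 Y Z). assert (HD : 0 <= D) by apply dist1_nonneg.
  apply Rle_trans with (sum_lt 8 (fun k => (2 * L * D) * Rabs (coord Y k - coord Z k))).
  - apply sum_lt_le. intros k Hk.
    assert (Hk' := HLk k Y Z Hk HY HZ). cbv beta in Hk'.
    set (u := coord Y k - coord Z k) in *.
    set (w := vector_field a beta Y k - vector_field a beta Z k) in *.
    assert (u * w <= Rabs u * Rabs w) by (rewrite <- Rabs_mult; apply Rle_abs).
    assert (Rabs u * Rabs w <= Rabs u * (L * D)) by (apply Rmult_le_compat_l; auto; apply Rabs_pos).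
    nra.
  - rewrite sum_lt_scal. unfold D, dist1.
    assert (HCS := sum_lt_Rabs_sqr 8 (fun k => coord Y k - coord Z k)).
    replace (INR 8) with 8 in HCS by (simpl; ring). revert HCS.
    generalize (sum_lt 8 (fun k => Rabs (coord Y k - coord Z k)))
      (sum_lt 8 (fun k => (coord Y k - coord Z k) ^ 2)).
    intros A Q HCS. nra.
Qed.

End VectorField.

(** * Uniqueness of the flow *)

Lemma bounded_config_mono (M M' : R) (Y : config) :
  M <= M' -> bounded_config M Y -> bounded_config M' Y.
Proof. intros HMM' HY k Hk. specialize (HY k Hk). lra. Qed.

Section Uniqueness.

Variables (a : R) (beta dlog : R -> R).
Hypothesis Hker : admissible_kernel beta dlog.

Lemma flow_coord_is_derive (Y : R -> config) (s : R) (k : nat) :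
  is_flow_solution a beta Y -> 0 < s -> (k < 8)%nat ->
  is_derive (fun u => coord (Y u) k) s (vector_field a beta (Y s) k).
Proof.
  intros [_ HY] Hs Hk. unfold coord, vector_field. destruct (k <? 4)%nat eqn:Ek.
  - apply Nat.ltb_lt in Ek. apply (HY s Hs k Ek).
  - apply Nat.ltb_ge in Ek. apply (HY s Hs (k - 4)%nat). lia.
Qed.

Lemma flow_coord_continuous (Y : R -> config) (k : nat) :
  is_flow_solution a beta Y -> (k < 8)%nat -> continuous_on_Rplus (fun u => coord (Y u) k).
Proof.
  intros HY Hk. apply continuous_on_Rplus_intro.
  - destruct HY as [HY _]. unfold coord. destruct (k <? 4)%nat eqn:Ek.
    + apply Nat.ltb_lt in Ek. apply (HY k Ek).
    + apply Nat.ltb_ge in Ek. apply (HY (k - 4)%nat). lia.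
  - intros t Ht. eapply is_derive_continuous. now apply flow_coord_is_derive.
Qed.

Lemma flow_bounded (Y : R -> config) (t : R) :
  is_flow_solution a beta Y -> 0 <= t ->
  exists M, 0 <= M /\ forall s, 0 <= s <= t -> bounded_config M (Y s).
Proof.
  intros HY Ht.
  set (N := fun u => sum_lt 8 (fun k => coord (Y u) k ^ 2)).
  assert (HN : forall u k, (k < 8)%nat -> coord (Y u) k ^ 2 <= N u).
  { intros u k Hk. apply (sum_lt_term_le 8 (fun k => coord (Y u) k ^ 2)); [| easy].
    intros; apply pow2_ge_0. }
  destruct (continuous_on_Rplus_bounded N t Ht) as [Nmax HNmax].
  { apply continuous_on_Rplus_sum_lt. intros k Hk.
    now apply continuous_on_Rplus_sqr, flow_coord_continuous. }
  exists (1 + Nmax). split.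
  - assert (HN0 := HN 0 0%nat ltac:(lia)). assert (HNm := HNmax 0 ltac:(lra)).
    assert (H2 := pow2_ge_0 (coord (Y 0) 0)). lra.
  - intros s Hs k Hk. assert (Hk' := HN s k Hk). assert (HNs := HNmax s Hs).
    set (x := coord (Y s) k) in *.
    assert (Rabs x ^ 2 = x ^ 2) by apply pow2_abs.
    assert (Hx := Rabs_pos x). nra.
Qed.

Theorem flow_unique (Y Z : R -> config) :
  is_flow_solution a beta Y -> is_flow_solution a beta Z ->
  (forall i, (i < 4)%nat -> Y 0 i = Z 0 i) ->
  forall t, 0 <= t -> forall i, (i < 4)%nat -> Y t i = Z t i.
Proof.
  intros HY HZ H0 t Ht i Hi.
  destruct (flow_bounded Y t HY Ht) as [MY [HMY HbY]].
  destruct (flow_bounded Z t HZ Ht) as [MZ [HMZ HbZ]].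
  set (M := Rmax MY MZ).
  destruct (vector_field_one_sided_lip a beta dlog M Hker) as [K HK].
  { unfold M. eapply Rle_trans; [exact HMY | apply Rmax_l]. }
  set (gap := fun u k => coord (Y u) k - coord (Z u) k).
  set (E := fun u => sum_lt 8 (fun k => gap u k ^ 2)).
  assert (HEt : E t <= 0).
  { apply (gronwall_zero E (fun u => sum_lt 8 (fun k =>
             2 * gap u k * (vector_field a beta (Y u) k - vector_field a beta (Z u) k))) K t Ht).
    - apply continuous_on_Rplus_sum_lt. intros k Hk. apply continuous_on_Rplus_sqr.
      apply continuous_on_Rplus_minus; now apply flow_coord_continuous.
    - intros s Hs. apply is_derive_sum_lt. intros k Hk. apply (is_derive_sqr (fun u => gap u k)).
      apply (is_derive_minus (fun u => coord (Y u) k)); now apply flow_coord_is_derive.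
    - intros s Hs. apply HK.
      + apply (bounded_config_mono MY); [apply Rmax_l | now apply HbY].
      + apply (bounded_config_mono MZ); [apply Rmax_r | now apply HbZ].
    - unfold E. transitivity (sum_lt 8 (fun _ => 0)); [| simpl; ring].
      apply sum_lt_ext. intros k Hk. unfold gap, coord. destruct (k <? 4)%nat eqn:Ek.
      + apply Nat.ltb_lt in Ek. rewrite (H0 k Ek). ring.
      + apply Nat.ltb_ge in Ek. rewrite (H0 (k - 4)%nat) by lia. ring. }
  assert (Hgap : forall k, (k < 8)%nat -> coord (Y t) k = coord (Z t) k).
  { intros k Hk. assert (Hk0 := sum_lt_nonneg_eq0 8 (fun k => gap t k ^ 2)
      ltac:(intros; apply pow2_ge_0) HEt k Hk).
    cbv beta in Hk0. apply Rminus_diag_uniq. unfold gap in Hk0. nra. }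
  assert (Hf := Hgap i ltac:(lia)). assert (Hs := Hgap (i + 4)%nat ltac:(lia)).
  rewrite !coord_fst in Hf by easy. rewrite !coord_snd in Hs.
  now apply injective_projections.
Qed.

End Uniqueness.

(** * Rotational symmetry *)

Definition rot90 (p : R * R) : R * R := (snd p, - fst p).

Definition next_index (i : nat) : nat :=
  match i with 0 => 1 | 1 => 2 | 2 => 3 | _ => 0 end%nat.

(* Rotating all points by -90 degrees and relabelling cyclically preserves [pmat] and the
   initial square. *)
Definition rotate_config (Y : config) : config := fun i => rot90 (Y (next_index i)).

Lemma sqdist_rotate (Y : config) (i j : nat) :
  sqdist (rotate_config Y) i j = sqdist Y (next_index i) (next_index j).
Proof. unfold sqdist, rotate_config, rot90. simpl. ring. Qed.

Lemma Zsum_rotate (beta : R -> R) (Y : config) : Zsum beta (rotate_config Y) = Zsum beta Y.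
Proof. unfold Zsum, sum4. rewrite !sqdist_rotate. cbn [Nat.eqb next_index]. ring. Qed.

Lemma rhs_rotate (a : R) (beta : R -> R) (Y : config) (i : nat) : (i < 4)%nat ->
  rhs1 a beta (rotate_config Y) i = rhs2 a beta Y (next_index i) /\
  rhs2 a beta (rotate_config Y) i = - rhs1 a beta Y (next_index i).
Proof.
  intro Hi. destruct i as [| [| [| [| i]]]]; try lia;
    unfold rhs1, rhs2, qmat, sum4; rewrite !sqdist_rotate, !Zsum_rotate;
    cbn [Nat.eqb next_index]; unfold pmat; cbn [Nat.eqb Nat.modulo Nat.add]; simpl;
    unfold rotate_config, rot90; simpl; split; ring.
Qed.

Lemma rotate_flow_solution (a : R) (beta : R -> R) (Y : R -> config) :
  is_flow_solution a beta Y -> is_flow_solution a beta (fun t => rotate_config (Y t)).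
Proof.
  assert (Hnext : forall i, (next_index i < 4)%nat) by (intros [| [| [|]]]; simpl; lia).
  intros [H0 Hd]. split.
  - intros i Hi. destruct (H0 (next_index i) (Hnext i)) as [Hfst Hsnd]. split; [exact Hsnd |].
    unfold rotate_config, rot90; simpl.
    eapply filterlim_comp; [exact Hfst | apply (@filterlim_opp R_AbsRing R_NormedModule)].
  - intros t Ht i Hi. destruct (Hd t Ht (next_index i) (Hnext i)) as [Hfst Hsnd].
    destruct (rhs_rotate a beta (Y t) i Hi) as [-> ->]. split; [exact Hsnd |].
    unfold rotate_config, rot90; simpl. now apply (is_derive_opp (fun u => fst (Y u (next_index i)))).
Qed.

Definition square_config (Y : config) : Prop :=
  Y 1%nat = (- snd (Y 0%nat), fst (Y 0%nat)) /\
  Y 2%nat = (- fst (Y 0%nat), - snd (Y 0%nat)) /\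
  Y 3%nat = (snd (Y 0%nat), - fst (Y 0%nat)).

Lemma flow_square (a : R) (beta dlog : R -> R) (X0 : R) (Y : R -> config) :
  admissible_kernel beta dlog -> Y 0 = init_config X0 -> is_flow_solution a beta Y ->
  forall t, 0 <= t -> square_config (Y t).
Proof.
  intros Hker H0 HY t Ht.
  assert (Hrot : forall i, (i < 4)%nat -> Y t i = rotate_config (Y t) i).
  { apply (flow_unique a beta dlog Hker Y _ HY (rotate_flow_solution a beta Y HY)); [| easy].
    intros j Hj. rewrite H0. destruct j as [| [| [| [| j]]]]; try lia;
      unfold rotate_config, rot90, init_config; simpl; f_equal; ring. }
  assert (E0 := Hrot 0%nat ltac:(lia)). assert (E1 := Hrot 1%nat ltac:(lia)).
  assert (E2 := Hrot 2%nat ltac:(lia)).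
  unfold rotate_config, rot90 in E0, E1, E2. simpl in E0, E1, E2. unfold square_config.
  destruct (Y t 0%nat) as [x0 v0], (Y t 1%nat) as [x1 v1],
    (Y t 2%nat) as [x2 v2], (Y t 3%nat) as [x3 v3].
  inversion E0. inversion E1. inversion E2. subst. simpl.
  split; [| split]; f_equal; ring.
Qed.

(** * The radial equation *)

Definition radius2 (Y : config) : R := fst (Y 0%nat) ^ 2 + snd (Y 0%nat) ^ 2.

Lemma radius2_nonneg (Y : config) : 0 <= radius2 Y.
Proof.
  unfold radius2. assert (H1 := pow2_ge_0 (fst (Y 0%nat))).
  assert (H2 := pow2_ge_0 (snd (Y 0%nat))). lra.
Qed.

Lemma square_sqdist (Y : config) (i j : nat) :
  square_config Y -> (i < 4)%nat -> (j < 4)%nat -> i <> j ->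
  sqdist Y i j = (if Nat.even (i + j) then 4 else 2) * radius2 Y.
Proof.
  intros [E1 [E2 E3]] Hi Hj Hij.
  destruct i as [| [| [| [| i]]]]; destruct j as [| [| [| [| j]]]]; try lia;
    unfold sqdist, radius2; rewrite ?E1, ?E2, ?E3; simpl; ring.
Qed.

Lemma square_Zsum (beta : R -> R) (Y : config) : square_config Y ->
  Zsum beta Y = 8 * beta (2 * radius2 Y) + 4 * beta (4 * radius2 Y).
Proof.
  intro HY. unfold Zsum, sum4. cbn [Nat.eqb].
  repeat rewrite (square_sqdist Y _ _ HY) by lia. simpl. ring.
Qed.

(* On a square of squared circumradius [r] the sides have squared length [2 r] and the diagonals
   [4 r], so [q] takes the values [beta (2 r) / Z] and [beta (4 r) / Z] there; see
   [square_radius2_rate]. *)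
Definition growth_rate (a : R) (beta dlog : R -> R) (r : R) : R :=
  (a - beta (2 * r) / (8 * beta (2 * r) + 4 * beta (4 * r))) * dlog (2 * r)
  + ((1 - 8 * a) / 4 - beta (4 * r) / (8 * beta (2 * r) + 4 * beta (4 * r))) * dlog (4 * r).

Section Radius.

Variables (a : R) (beta dlog : R -> R).
Hypothesis Hker : admissible_kernel beta dlog.

Lemma square_radius2_rate (Y : config) : square_config Y ->
  2 * fst (Y 0%nat) * rhs1 a beta Y 0 + 2 * snd (Y 0%nat) * rhs2 a beta Y 0
  = 16 * radius2 Y * growth_rate a beta dlog (radius2 Y).
Proof.
  intro HY. pose proof HY as [E1 [E2 E3]].
  assert (Hr := radius2_nonneg Y).
  assert (P2 := kernel_pos _ _ Hker (2 * radius2 Y) ltac:(lra)).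
  assert (P4 := kernel_pos _ _ Hker (4 * radius2 Y) ltac:(lra)).
  unfold rhs1, rhs2, qmat, sum4. cbn [Nat.eqb]. rewrite (square_Zsum beta Y HY).
  repeat rewrite (square_sqdist Y 0 _ HY) by lia. simpl Nat.even.
  rewrite !(dlogb_eq _ _ Hker) by lra.
  unfold pmat, growth_rate. cbn [Nat.eqb Nat.modulo Nat.add]. simpl.
  rewrite E1, E2, E3. simpl. unfold radius2 in *. field. lra.
Qed.

Lemma flow_radius2_is_derive (X0 : R) (Y : R -> config) :
  Y 0 = init_config X0 -> is_flow_solution a beta Y -> forall t, 0 < t ->
  is_derive (fun u => radius2 (Y u)) t
    (16 * radius2 (Y t) * growth_rate a beta dlog (radius2 (Y t))).
Proof.
  intros H0 HY t Ht. destruct (proj2 HY t Ht 0%nat ltac:(lia)) as [Hfst Hsnd].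
  rewrite <- (square_radius2_rate (Y t)) by (apply (flow_square a beta dlog X0); auto; lra).
  apply (is_derive_plus (fun u => fst (Y u 0%nat) ^ 2)); now apply is_derive_sqr.
Qed.

Lemma flow_radius2_continuous (Y : R -> config) :
  is_flow_solution a beta Y -> continuous_on_Rplus (fun u => radius2 (Y u)).
Proof.
  intro HY. unfold radius2.
  apply (continuous_on_Rplus_plus (fun u => coord (Y u) 0 ^ 2) (fun u => coord (Y u) (0 + 4) ^ 2));
    apply continuous_on_Rplus_sqr; apply (flow_coord_continuous a beta); auto; lia.
Qed.

End Radius.

Lemma square_diam_ge (Y : config) : square_config Y -> sqrt (4 * radius2 Y) <= diam Y.
Proof.
  intro HY.
  replace (4 * radius2 Y) with (sqdist Y 0 2) by (rewrite (square_sqdist Y 0 2 HY) by lia; reflexivity).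
  unfold diam, max4.
  eapply Rle_trans; [| apply Rmax_l]. eapply Rle_trans; [| apply Rmax_l].
  eapply Rle_trans; [| apply Rmax_r]. apply Rmax_l.
Qed.

(** * The two kernels *)

Definition dlog_cauchy (x : R) : R := - / (1 + x).
Definition dlog_gauss (x : R) : R := -1.

Lemma Rinv_1plus_lip (x y : R) :
  0 <= x -> 0 <= y -> Rabs (/ (1 + x) - / (1 + y)) <= Rabs (x - y).
Proof.
  intros Hx Hy.
  replace (/ (1 + x) - / (1 + y)) with ((y - x) * / ((1 + x) * (1 + y))) by (field; lra).
  rewrite Rabs_mult, Rabs_minus_sym.
  assert (0 < / ((1 + x) * (1 + y))) by (apply Rinv_0_lt_compat; nra).
  assert (/ ((1 + x) * (1 + y)) <= 1) by (rewrite <- Rinv_1; apply Rinv_le_contravar; nra).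
  rewrite (Rabs_pos_eq (/ _)) by lra. assert (Hxy := Rabs_pos (x - y)). nra.
Qed.

Lemma Rinv_1plus_le_1 (x : R) : 0 <= x -> 0 < / (1 + x) <= 1.
Proof.
  intro Hx. split; [apply Rinv_0_lt_compat; lra |].
  rewrite <- Rinv_1. apply Rinv_le_contravar; lra.
Qed.

Lemma cauchy_admissible : admissible_kernel beta_cauchy dlog_cauchy.
Proof.
  unfold beta_cauchy, dlog_cauchy. split.
  - intros x Hx. now apply Rinv_1plus_le_1.
  - intros x Hx. now apply Rinv_1plus_le_1.
  - exact Rinv_1plus_lip.
  - intros D HD. exists (/ (1 + D)). split; [apply Rinv_0_lt_compat; lra |].
    intros x Hx. apply Rinv_le_contravar; lra.
  - intros x Hx. destruct (Rinv_1plus_le_1 x Hx). rewrite Rabs_Ropp, Rabs_pos_eq; lra.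
  - intros x y Hx Hy. replace (- / (1 + x) - - / (1 + y)) with (- (/ (1 + x) - / (1 + y))) by ring.
    rewrite Rabs_Ropp. now apply Rinv_1plus_lip.
  - intros x Hx. unfold dlogb, beta_cauchy. apply is_derive_unique.
    destruct (Rinv_1plus_le_1 x Hx). auto_derive; [repeat split; lra |].
    rewrite Rinv_inv. field. lra.
Qed.

Lemma exp_le_exp (x y : R) : x <= y -> exp x <= exp y.
Proof. intros [H | ->]; [left; now apply exp_increasing | lra]. Qed.

Lemma exp_neg_lip (x y : R) : 0 <= x <= y -> Rabs (exp (- x) - exp (- y)) <= Rabs (x - y).
Proof.
  intros [Hx Hxy].
  assert (E : exp (- y) = exp (- x) * exp (- (y - x))) by (rewrite <- exp_plus; f_equal; ring).
  assert (Hu : 0 < exp (- x)) by apply exp_pos.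
  assert (Hu1 : exp (- x) <= 1) by (rewrite <- exp_0; apply exp_le_exp; lra).
  assert (Hw1 : exp (- (y - x)) <= 1) by (rewrite <- exp_0; apply exp_le_exp; lra).
  assert (Hlin := exp_ineq1_le (- (y - x))).
  rewrite E, Rabs_pos_eq, Rabs_minus_sym, Rabs_pos_eq by nra. nra.
Qed.

Lemma gauss_admissible : admissible_kernel beta_gauss dlog_gauss.
Proof.
  unfold beta_gauss, dlog_gauss. split.
  - intros x _. apply exp_pos.
  - intros x Hx. rewrite <- exp_0. apply exp_le_exp. lra.
  - intros x y Hx Hy. destruct (Rle_dec x y).
    + apply exp_neg_lip. lra.
    + rewrite Rabs_minus_sym, (Rabs_minus_sym x). apply exp_neg_lip. lra.
  - intros D HD. exists (exp (- D)). split; [apply exp_pos |].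
    intros x Hx. apply exp_le_exp. lra.
  - intros x _. unfold Rabs. destruct Rcase_abs; lra.
  - intros x y _ _. rewrite Rminus_diag, Rabs_R0. apply Rabs_pos.
  - intros x Hx. unfold dlogb, beta_gauss. apply is_derive_unique.
    apply (is_derive_ext (fun u => - u)); [intro u; now rewrite ln_exp |].
    auto_derive; easy.
Qed.

Lemma cauchy_growth_rate (a r : R) : 0 <= r ->
  growth_rate a beta_cauchy dlog_cauchy r
  = ((20 * a - 2) * (1 + 2 * r) + (1 - 8 * a)) / ((1 + 2 * r) * (12 + 88 * r + 160 * r ^ 2)).
Proof. intro Hr. unfold growth_rate, beta_cauchy, dlog_cauchy. field. repeat split; nra. Qed.

Lemma cauchy_growth_rate_nonneg (a r : R) :
  1 / 10 < a -> a < 1 / 8 -> 0 <= r -> 0 <= growth_rate a beta_cauchy dlog_cauchy r.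
Proof.
  intros Ha1 Ha2 Hr. rewrite cauchy_growth_rate by easy.
  apply Rmult_le_pos; [nra |]. left. apply Rinv_0_lt_compat. nra.
Qed.

(* [r^2 / (12 + 88 r + 160 r^2)] is increasing on [[0, +oo)]. *)
Lemma cauchy_growth_rate_lower (a r0 r : R) :
  1 / 10 < a -> a < 1 / 8 -> 0 <= r0 <= r ->
  16 * (20 * a - 2) * r0 ^ 2 / (12 + 88 * r0 + 160 * r0 ^ 2)
    <= 16 * r ^ 2 * growth_rate a beta_cauchy dlog_cauchy r.
Proof.
  intros Ha1 Ha2 Hr. rewrite cauchy_growth_rate by lra.
  set (P0 := 12 + 88 * r0 + 160 * r0 ^ 2). set (P := 12 + 88 * r + 160 * r ^ 2).
  assert (HP0 : 0 < P0) by (unfold P0; nra). assert (HP : 0 < P) by (unfold P; nra).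
  assert (Hmono : r0 ^ 2 * P <= r ^ 2 * P0).
  { assert (r ^ 2 * P0 - r0 ^ 2 * P = (r - r0) * (12 * (r + r0) + 88 * r * r0))
      by (unfold P0, P; ring).
    assert (0 <= (r - r0) * (12 * (r + r0) + 88 * r * r0)) by (apply Rmult_le_pos; nra). lra. }
  replace (16 * r ^ 2 * (((20 * a - 2) * (1 + 2 * r) + (1 - 8 * a)) / ((1 + 2 * r) * P)))
    with (16 * (20 * a - 2) * r ^ 2 / P + 16 * (1 - 8 * a) * r ^ 2 / ((1 + 2 * r) * P))
    by (field; lra).
  assert (0 <= 16 * (1 - 8 * a) * r ^ 2 / ((1 + 2 * r) * P)).
  { apply Rmult_le_pos; [nra |]. left. apply Rinv_0_lt_compat. nra. }
  enough (16 * (20 * a - 2) * r0 ^ 2 / P0 <= 16 * (20 * a - 2) * r ^ 2 / P) by lra.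
  unfold Rdiv. apply Rmult_le_reg_r with (P * P0); [nra |].
  replace (16 * (20 * a - 2) * r0 ^ 2 * / P0 * (P * P0)) with (16 * (20 * a - 2) * (r0 ^ 2 * P))
    by (field; lra).
  replace (16 * (20 * a - 2) * r ^ 2 * / P * (P * P0)) with (16 * (20 * a - 2) * (r ^ 2 * P0))
    by (field; lra).
  apply Rmult_le_compat_l; [lra | easy].
Qed.

Lemma gauss_growth_rate (a r : R) :
  growth_rate a beta_gauss dlog_gauss r
  = (4 * a * exp (- (2 * r)) + 8 * a - 1) / (8 + 4 * exp (- (2 * r))).
Proof.
  unfold growth_rate, beta_gauss, dlog_gauss.
  replace (exp (- (4 * r))) with (exp (- (2 * r)) * exp (- (2 * r)))
    by (rewrite <- exp_plus; f_equal; ring).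
  assert (He := exp_pos (- (2 * r))). field. split; nra.
Qed.

Lemma gauss_growth_rate_ge (a r : R) : 0 < a -> - / 4 <= growth_rate a beta_gauss dlog_gauss r.
Proof.
  intro Ha. rewrite gauss_growth_rate. assert (He := exp_pos (- (2 * r))).
  apply Rmult_le_reg_r with (8 + 4 * exp (- (2 * r))); [lra |].
  unfold Rdiv. rewrite Rmult_assoc, Rinv_l by lra. nra.
Qed.

(* Near the collision [r = 0] the rate tends to [(12 a - 1) / 12 > 0]. *)
Lemma gauss_growth_rate_pos_near_0 (a : R) :
  1 / 12 < a -> a < 1 / 8 ->
  exists r1, 0 < r1 /\ forall r, 0 <= r < r1 -> 0 < growth_rate a beta_gauss dlog_gauss r.
Proof.
  intros Ha1 Ha2.
  set (k := (1 - 8 * a) / (4 * a)).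
  assert (Hk0 : 0 < k) by (unfold k; apply Rdiv_lt_0_compat; lra).
  assert (Hk1 : k < 1) by (unfold k; apply Rmult_lt_reg_r with (4 * a); [lra |];
    unfold Rdiv; rewrite Rmult_assoc, Rinv_l by lra; lra).
  assert (Hlk : ln k < 0) by (rewrite <- ln_1; now apply ln_increasing).
  exists (- ln k / 2). split; [lra |]. intros r Hr.
  rewrite gauss_growth_rate. assert (He := exp_pos (- (2 * r))).
  assert (Hke : k < exp (- (2 * r))) by (rewrite <- (exp_ln k) by easy; apply exp_increasing; lra).
  assert (4 * a * k = 1 - 8 * a) by (unfold k; field; lra).
  apply Rdiv_lt_0_compat; nra.
Qed.

Lemma quarter_power_le_sqrt (c A t q : R) :
  0 < c -> c <= 1 -> c <= A -> 0 < t -> 0 <= q -> A * t <= q ^ 2 ->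
  c * Rpower t (1 / 4) <= sqrt q.
Proof.
  intros Hc0 Hc1 HcA Ht Hq Hat.
  set (w := Rpower t (1 / 4)). assert (Hw : 0 < w) by apply exp_pos.
  assert (Hw4 : w ^ 4 = t).
  { unfold w. rewrite <- Rpower_pow by apply exp_pos.
    rewrite Rpower_mult. replace (1 / 4 * INR 4) with 1 by (simpl; field). now apply Rpower_1. }
  assert (Hc4 : c ^ 4 <= A).
  { assert (c ^ 2 <= 1) by nra. assert (c ^ 3 <= 1) by (simpl in *; nra).
    assert (c ^ 4 <= c) by (simpl in *; nra). lra. }
  assert (Hsq : ((c * w) ^ 2) ^ 2 <= q ^ 2).
  { replace (((c * w) ^ 2) ^ 2) with (c ^ 4 * w ^ 4) by ring. rewrite Hw4. nra. }
  rewrite <- (sqrt_pow2 (c * w)) by nra. apply sqrt_le_1_alt.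
  assert (H2 := pow2_ge_0 (c * w)). nra.
Qed.

Theorem cauchy_diam_growth (a X0 : R) (Y : R -> config) :
  1 / 10 < a -> a < 1 / 8 -> 0 < X0 -> Y 0 = init_config X0 ->
  is_flow_solution a beta_cauchy Y ->
  exists c, 0 < c /\ forall t, 1 <= t -> c * Rpower t (1 / 4) <= diam (Y t).
Proof.
  intros Ha1 Ha2 HX H0 HY.
  set (rho := fun u => radius2 (Y u)).
  assert (Hd := flow_radius2_is_derive a _ _ cauchy_admissible X0 Y H0 HY).
  assert (Hc := flow_radius2_continuous a _ Y HY).
  assert (Hrho0 : rho 0 = X0 ^ 2) by (unfold rho, radius2; rewrite H0; simpl; ring).
  assert (Hmono : forall t, 0 <= t -> X0 ^ 2 <= rho t).
  { intros t Ht. rewrite <- Hrho0. apply (Rplus_deriv_nonneg_le rho _ t Ht Hc Hd).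
    intros s _. assert (Hr := radius2_nonneg (Y s)).
    assert (HS := cauchy_growth_rate_nonneg a (rho s) Ha1 Ha2 Hr). unfold rho in *. nra. }
  set (K := 16 * (20 * a - 2) * (X0 ^ 2) ^ 2 / (12 + 88 * X0 ^ 2 + 160 * (X0 ^ 2) ^ 2)).
  assert (HK : 0 < K).
  { assert (HX2 : 0 < X0 ^ 2) by (apply pow_lt; lra).
    unfold K. apply Rdiv_lt_0_compat; [apply Rmult_lt_0_compat; [lra | now apply pow_lt] | nra]. }
  assert (Hgrow : forall t, 0 <= t -> 2 * K * t <= rho t ^ 2).
  { intros t Ht. enough (rho 0 ^ 2 - 2 * K * 0 <= rho t ^ 2 - 2 * K * t) by nra.
    apply (Rplus_deriv_nonneg_le (fun u => rho u ^ 2 - 2 * K * u)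
      (fun u => 2 * rho u * (16 * rho u * growth_rate a beta_cauchy dlog_cauchy (rho u)) - 2 * K) t Ht).
    - apply continuous_on_Rplus_minus; [now apply continuous_on_Rplus_sqr |].
      apply continuous_on_Rplus_of_continuous. intro x.
      apply (is_derive_continuous _ _ (2 * K)). auto_derive; [easy | ring].
    - intros s Hs. apply (is_derive_minus (fun u => rho u ^ 2)); [now apply is_derive_sqr, Hd |].
      auto_derive; [easy | ring].
    - intros s Hs. assert (HL := cauchy_growth_rate_lower a (X0 ^ 2) (rho s) Ha1 Ha2
        (conj (pow2_ge_0 X0) (Hmono s (proj1 Hs)))). fold K in HL. nra. }
  exists (Rmin 1 (32 * K)). split; [apply Rmin_pos; lra |]. intros t Ht.
  eapply Rle_trans; [| apply square_diam_ge, (flow_square a _ _ X0 Y cauchy_admissible H0 HY); lra].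
  apply (quarter_power_le_sqrt _ (32 * K)); [apply Rmin_pos; lra | apply Rmin_l | apply Rmin_r | lra | |].
  - assert (Hr := radius2_nonneg (Y t)). lra.
  - assert (Hg := Hgrow t ltac:(lra)). unfold rho in Hg. nra.
Qed.

Theorem gauss_diam_lower_bound (a X0 : R) (Y : R -> config) :
  1 / 12 < a -> a < 1 / 8 -> 0 < X0 -> Y 0 = init_config X0 ->
  is_flow_solution a beta_gauss Y ->
  exists c, 0 < c /\ forall t, 0 <= t -> c <= diam (Y t).
Proof.
  intros Ha1 Ha2 HX H0 HY.
  set (rho := fun u => radius2 (Y u)).
  assert (Hd := flow_radius2_is_derive a _ _ gauss_admissible X0 Y H0 HY).
  assert (Hc := flow_radius2_continuous a _ Y HY).
  assert (Hrho0 : rho 0 = X0 ^ 2) by (unfold rho, radius2; rewrite H0; simpl; ring).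
  (* [rho' >= - 4 rho] keeps [rho] away from 0 in finite time *)
  assert (Hpos : forall t, 0 <= t -> 0 < rho t).
  { intros t Ht.
    enough (rho 0 * exp (4 * 0) <= rho t * exp (4 * t)) by
      (rewrite Hrho0, Rmult_0_r, exp_0 in *; assert (Hexp := exp_pos (4 * t)); nra).
    apply (Rplus_deriv_nonneg_le (fun u => rho u * exp (4 * u))
      (fun u => 16 * rho u * growth_rate a beta_gauss dlog_gauss (rho u) * exp (4 * u)
                + rho u * (exp (4 * u) * 4)) t Ht).
    - apply continuous_on_Rplus_mult; [easy |]. apply continuous_on_Rplus_of_continuous.
      intro x. apply (is_derive_continuous _ _ (exp (4 * x) * 4)). auto_derive; [easy | ring].
    - intros s Hs. apply (is_derive_mult rho (fun u => exp (4 * u))); [now apply Hd | | exact Rmult_comm].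
      auto_derive; [easy | ring].
    - intros s _. assert (Hr := radius2_nonneg (Y s)).
      assert (HS := gauss_growth_rate_ge a (rho s) ltac:(lra)).
      assert (Hexp := exp_pos (4 * s)).
      assert (0 <= rho s * (16 * growth_rate a beta_gauss dlog_gauss (rho s) + 4))
        by (apply Rmult_le_pos; unfold rho in *; lra).
      nra. }
  destruct (gauss_growth_rate_pos_near_0 a Ha1 Ha2) as [r1 [Hr1 Hrate]].
  set (m := Rmin (X0 ^ 2) (r1 / 2)).
  assert (Hm : 0 < m) by (apply Rmin_pos; nra).
  assert (Hlow : forall t, 0 <= t -> m <= rho t).
  { apply (Rplus_lower_barrier rho _ m Hc Hd); [rewrite Hrho0; apply Rmin_l |].
    intros s Hs Hsm. assert (Hm2 : m <= r1 / 2) by apply Rmin_r.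
    assert (Hps := Hpos s ltac:(lra)).
    assert (HS := Hrate (rho s) ltac:(lra)). unfold rho in *. nra. }
  exists (sqrt (4 * m)). split; [apply sqrt_lt_R0; lra |]. intros t Ht.
  eapply Rle_trans; [| apply square_diam_ge, (flow_square a _ _ X0 Y gauss_admissible H0 HY); lra].
  apply sqrt_le_1_alt. assert (Hl := Hlow t Ht). unfold rho in Hl. lra.
Qed.

Theorem mainTheorem7 :
  (forall (a X0 : R) (Y : R -> config),
     1 / 10 < a -> a < 1 / 8 -> 0 < X0 ->
     Y 0 = init_config X0 ->
     is_flow_solution a beta_cauchy Y ->
     exists c : R, 0 < c /\
       forall t : R, 1 <= t -> c * Rpower t (1 / 4) <= diam (Y t)) /\
  (forall (a X0 : R) (Y : R -> config),
     1 / 12 < a -> a < 1 / 8 -> 0 < X0 ->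
     Y 0 = init_config X0 ->
     is_flow_solution a beta_gauss Y ->
     exists c : R, 0 < c /\
       forall t : R, 0 <= t -> c <= diam (Y t)).
Proof.
  split.
  - exact cauchy_diam_growth.
  - exact gauss_diam_lower_bound.
Qed.
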